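(* The function $\mathfrak F$ restricted to $[1,\infty)$ is a uniform continuation of the sequence $F$.
   Context: $F$: $F_1=1,F_2=2,F_{n+2}=F_{n+1}+F_n$; $\phi$ golden ratio; $\mathfrak F(x)=\frac{\phi}{\sqrt5}(\phi^x+\phi^{-x}\cos(\pi x)\phi^{-2})$, so $\mathfrak F(n)=F_n$. For an increasing sequence $H$ of positive integers, a continuous function $h:[1,\infty)\to\mathbb{R}$ is a uniform continuation of $H$ if $h(n)=H_n$ for all $n\in\mathbb{N}$ and the functions $h_n:[0,1]\to[0,1]$, $h_n(p)=\frac{h(n+p)-h(n)}{h(n+1)-h(n)}$, converge uniformly on $[0,1]$ to an increasing continuous function. *)

From Stdlib Require Import Reals Lra.
From Coquelicot Require Import Coquelicot.
Open Scope R_scope.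

(* The sequence F : F_1 = 1, F_2 = 2, F_{n+2} = F_{n+1} + F_n  (indices n >= 1;
   the value at index 0 is an irrelevant dummy). *)
Fixpoint Fib (n : nat) : nat :=
  match n with
  | O => 1%nat
  | S O => 1%nat
  | S (S O) => 2%nat
  | S (S ((S m) as k) as l) => (Fib l + Fib k)%nat
  end.

Definition phi : R := (1 + sqrt 5) / 2.

Definition frakF (x : R) : R :=
  phi / sqrt 5 * (Rpower phi x + Rpower phi (- x) * cos (PI * x) * / phi ^ 2).

Definition hn (h : R -> R) (n : nat) (p : R) : R :=
  (h (INR n + p) - h (INR n)) / (h (INR n + 1) - h (INR n)).

Definition uniform_continuation (H : nat -> nat) (h : R -> R) : Prop :=
  (forall n : nat, (1 <= n)%nat -> (0 < H n)%nat /\ (H n < H (S n))%nat) /\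
  (forall x : R, 1 <= x ->
     filterlim h (within (fun y => 1 <= y) (locally x)) (locally (h x))) /\
  (forall n : nat, (1 <= n)%nat -> h (INR n) = INR (H n)) /\
  (forall (n : nat) (p : R), (1 <= n)%nat -> 0 <= p <= 1 -> 0 <= hn h n p <= 1) /\
  (exists g : R -> R,
     (forall p : R, 0 <= p <= 1 ->
        filterlim g (within (fun q => 0 <= q <= 1) (locally p)) (locally (g p))) /\
     (forall p q : R, 0 <= p -> p < q -> q <= 1 -> g p < g q) /\
     (forall eps : R, 0 < eps -> exists N : nat, forall n : nat, (N <= n)%nat ->
        forall p : R, 0 <= p <= 1 -> Rabs (hn h n p - g p) < eps)).

(* Split x = n + p with p in [0, 1].  Then frakF (n + p) is phi^(n+1) / sqrt 5 times
   w_e(p) = phi^p + e cos(pi p) phi^-p with e = e_n = (-1/phi^2)^n / phi^2, and h_n, being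
   invariant under rescaling, is the normalized w_{e_n}.  For n >= 1 we have
   -1/4 <= e_n <= 1/16, and the elementary bounds phi^p >= 1 + 3p/8 and
   1 - cos(pi q) <= 4q keep the normalized w_e inside [0, 1] on that range.  As e -> 0 the
   normalized w_e differs from (phi^p - 1)/(phi - 1) by O(|e|), uniformly in p, and e_n
   decays geometrically.  Interpolation holds because frakF satisfies the Fibonacci
   recurrence at every real point and frakF 0 = frakF 1 = 1. *)

From Stdlib Require Import Reals Lra Lia Nsatz.
From Coquelicot Require Import Coquelicot.
Open Scope R_scope.

Lemma phi_sqr : phi ^ 2 = phi + 1.
Proof.
  unfold phi. pose proof (sqrt_sqrt 5 ltac:(lra)). nra.
Qed.

Lemma phi_bounds : 1.618 < phi < 1.619.
Proof.
  unfold phi. pose proof (sqrt_sqrt 5 ltac:(lra)). pose proof (sqrt_pos 5). nra.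
Qed.

Lemma phi_pos : 0 < phi.
Proof. pose proof phi_bounds; lra. Qed.

Lemma phi_inv : / phi = phi - 1.
Proof.
  pose proof phi_bounds. pose proof phi_sqr.
  apply (Rmult_eq_reg_l phi); [|lra]. rewrite Rinv_r by lra. nra.
Qed.

Lemma sqrt5_eq : sqrt 5 = 2 * phi - 1.
Proof. unfold phi. lra. Qed.

Lemma Rpower_phi_pos (p : R) : 0 < Rpower phi p.
Proof. apply exp_pos. Qed.

(* [ln phi >= 2 - phi] because [exp (- ln phi) = phi - 1 >= 1 - ln phi]. *)
Lemma Rpower_phi_ge (p : R) : 0 <= p -> 1 + 3 / 8 * p <= Rpower phi p.
Proof.
  intros Hp. pose proof phi_bounds.
  assert (Hln : 3 / 8 <= ln phi).
  { pose proof (exp_ineq1_le (- ln phi)) as H1.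
    rewrite exp_Ropp, exp_ln, phi_inv in H1 by exact phi_pos. lra. }
  pose proof (exp_ineq1_le (p * ln phi)). unfold Rpower. nra.
Qed.

Lemma Rpower_phi_le (p : R) : p <= 1 -> Rpower phi p <= phi.
Proof.
  intros Hp. rewrite <- (Rpower_1 phi) at 2 by exact phi_pos.
  apply Rle_Rpower; [pose proof phi_bounds; lra | exact Hp].
Qed.

Lemma phi_sub_Rpower_phi_ge (p : R) : 0 <= p <= 1 ->
  3 / 8 * (1 - p) * Rpower phi p <= phi - Rpower phi p.
Proof.
  intros Hp. pose proof (Rpower_phi_ge (1 - p) ltac:(lra)).
  assert (Hsplit : Rpower phi p * Rpower phi (1 - p) = phi).
  { rewrite <- Rpower_plus, Rplus_minus. apply Rpower_1, phi_pos. }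
  pose proof (Rpower_phi_pos p). nra.
Qed.

Lemma cos_PI_nat_add (n : nat) (p : R) :
  cos (PI * (INR n + p)) = (-1) ^ n * cos (PI * p).
Proof.
  induction n as [|n IH].
  - simpl. rewrite Rplus_0_l. ring.
  - rewrite S_INR. replace (PI * (INR n + 1 + p)) with (PI * (INR n + p) + PI) by ring.
    rewrite neg_cos, IH. simpl. ring.
Qed.

(* On [0, 1/2] use [cos x >= 1 - x^2/2] with [x <= PI/2]; beyond, [1 - cos <= 2]. *)
Lemma one_sub_cos_PI_le (q : R) : 0 <= q <= 1 -> 1 - cos (PI * q) <= 4 * q.
Proof.
  intros Hq. pose proof PI_RGT_0. pose proof PI_4.
  destruct (Rle_lt_dec q (1 / 2)) as [Hsmall | Hlarge].
  - assert (Hcos := cos_bound (PI * q) 0).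
    unfold cos_approx, cos_term in Hcos. simpl in Hcos.
    destruct Hcos as [Hcos _]; [nra | nra |].
    assert (0 <= PI * q <= 2) by nra.
    assert (PI * q * (PI * q) <= 2 * (PI * q)) by nra.
    nra.
  - pose proof (COS_bound (PI * q)). lra.
Qed.

Lemma one_add_cos_PI_le (q : R) : 0 <= q <= 1 -> 1 + cos (PI * q) <= 4 * (1 - q).
Proof.
  intros Hq. replace (PI * q) with (PI - PI * (1 - q)) by ring.
  rewrite Rtrigo_facts.cos_pi_minus. pose proof (one_sub_cos_PI_le (1 - q)). lra.
Qed.

Definition wave (e p : R) : R := Rpower phi p + e * cos (PI * p) / Rpower phi p.

Definition wave_coef (n : nat) : R := (- / phi ^ 2) ^ n / phi ^ 2.

Lemma frakF_nat_add (n : nat) (p : R) :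
  frakF (INR n + p) = phi ^ S n / sqrt 5 * wave (wave_coef n) p.
Proof.
  unfold frakF, wave, wave_coef.
  rewrite Ropp_plus_distr, !Rpower_plus, !Rpower_Ropp, Rpower_pow, cos_PI_nat_add
    by exact phi_pos.
  replace (- / phi ^ 2) with (-1 * / phi ^ 2) by ring.
  rewrite Rpow_mult_distr, pow_inv, <- pow_mult, Nat.mul_comm, pow_mult.
  pose proof phi_pos. pose proof (Rpower_phi_pos p).
  assert (phi ^ n <> 0) by (apply pow_nonzero; lra).
  assert (sqrt 5 <> 0) by (rewrite sqrt5_eq; pose proof phi_bounds; lra).
  simpl. field. repeat split; lra.
Qed.

Lemma frakF_add2 (x : R) : frakF (x + 2) = frakF (x + 1) + frakF x.
Proof.
  replace (x + 2) with (INR 2 + x) by (simpl; ring).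
  replace (x + 1) with (INR 1 + x) by (simpl; ring).
  rewrite <- (Rplus_0_l x) at 3. change 0 with (INR 0).
  rewrite !frakF_nat_add. unfold wave, wave_coef.
  pose proof phi_sqr. pose proof phi_bounds. pose proof (Rpower_phi_pos x).
  assert (sqrt 5 <> 0) by (rewrite sqrt5_eq; lra).
  set (T := Rpower phi x) in *. set (C := cos (PI * x)).
  field_simplify; [| repeat split; lra ..].
  (* [phi] is abstracted so that [nsatz] works from [phi ^ 2 = phi + 1] alone. *)
  assert (E : phi ^ 6 * T ^ 2 + C = phi * (phi ^ 4 * T ^ 2 + phi ^ 3 * T ^ 2 + phi * C - C))
    by (clear - H; generalize dependent phi; intros; simpl in *; nsatz).
  rewrite E. field. repeat split; lra.
Qed.

Lemma frakF_nat (n : nat) : frakF (INR n) = phi ^ S n / sqrt 5 * (1 + wave_coef n).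
Proof.
  rewrite <- (Rplus_0_r (INR n)), frakF_nat_add. unfold wave.
  rewrite Rpower_O by exact phi_pos. rewrite Rmult_0_r, cos_0. f_equal. field.
Qed.

Lemma frakF_0 : frakF 0 = 1.
Proof.
  change 0 with (INR 0). rewrite frakF_nat. unfold wave_coef.
  rewrite sqrt5_eq. pose proof phi_sqr. pose proof phi_bounds.
  simpl in *. field_simplify; [| lra ..].
  replace (2 * phi ^ 2 - phi) with (phi ^ 2 + 1) by nra. field. nra.
Qed.

Lemma frakF_1 : frakF 1 = 1.
Proof.
  change 1 with (INR 1) at 1. rewrite frakF_nat. unfold wave_coef.
  rewrite sqrt5_eq. pose proof phi_sqr. pose proof phi_bounds.
  simpl in *. field_simplify; [| lra ..].
  replace (2 * phi ^ 3 - phi ^ 2) with (phi ^ 4 - 1) by (simpl; nra). field. simpl; nra.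
Qed.

Lemma Fib_SSS (n : nat) : Fib (S (S (S n))) = (Fib (S (S n)) + Fib (S n))%nat.
Proof. reflexivity. Qed.

Lemma Fib_pos_lt (n : nat) : (0 < Fib (S n))%nat /\ (Fib (S n) < Fib (S (S n)))%nat.
Proof.
  induction n as [|n IH]; [simpl; lia|]. rewrite Fib_SSS. lia.
Qed.

Lemma frakF_INR_Fib (n : nat) : (1 <= n)%nat -> frakF (INR n) = INR (Fib n).
Proof.
  assert (Hpair : forall m, frakF (INR (S m)) = INR (Fib (S m)) /\
                            frakF (INR (S m) + 1) = INR (Fib (S (S m)))).
  { induction m as [|m [IH1 IH2]].
    - simpl. split; [exact frakF_1|].
      replace (1 + 1) with (0 + 2) by ring.
      rewrite frakF_add2, !Rplus_0_l, frakF_1, frakF_0. ring.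
    - split; [rewrite S_INR; exact IH2|].
      replace (INR (S (S m)) + 1) with (INR (S m) + 2) by (rewrite !S_INR; ring).
      rewrite frakF_add2, Fib_SSS, plus_INR, IH1, IH2. ring. }
  intros Hn. destruct n as [|m]; [lia|]. apply Hpair.
Qed.

Definition normalize (f : R -> R) (p : R) : R := (f p - f 0) / (f 1 - f 0).

Lemma hn_normalize (h : R -> R) (n : nat) (p : R) :
  hn h n p = normalize (fun q => h (INR n + q)) p.
Proof. unfold hn, normalize. rewrite Rplus_0_r. reflexivity. Qed.

(* Also for [f 1 = f 0], where both sides are [_ / 0 = 0]. *)
Lemma normalize_scale (c : R) (f : R -> R) (p : R) :
  c <> 0 -> normalize (fun q => c * f q) p = normalize f p.
Proof.
  intros Hc. unfold normalize.
  destruct (Req_dec (f 1) (f 0)) as [E | E].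
  - rewrite E, !Rminus_diag. unfold Rdiv. rewrite Rinv_0, Rmult_0_r. ring.
  - rewrite <- !Rmult_minus_distr_l. field. split; [lra | exact Hc].
Qed.

Lemma hn_frakF (n : nat) (p : R) : hn frakF n p = normalize (wave (wave_coef n)) p.
Proof.
  rewrite hn_normalize. unfold normalize at 1. rewrite !frakF_nat_add.
  apply (normalize_scale _ (wave (wave_coef n))).
  assert (sqrt 5 <> 0) by (rewrite sqrt5_eq; pose proof phi_bounds; lra).
  pose proof (pow_lt phi (S n) phi_pos).
  unfold Rdiv. apply Rmult_integral_contrapositive. split; [lra | now apply Rinv_neq_0_compat].
Qed.

Lemma normalize_wave (e p : R) :
  normalize (wave e) p
  = (Rpower phi p - 1 + e * (cos (PI * p) / Rpower phi p - 1)) / (phi - 1 - e * phi).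
Proof.
  unfold normalize, wave.
  rewrite Rpower_O, Rpower_1, Rmult_0_r, Rmult_1_r, cos_0, cos_PI by exact phi_pos.
  pose proof (Rpower_phi_pos p).
  f_equal.
  - field. lra.
  - unfold Rdiv. rewrite phi_inv, Rinv_1. ring.
Qed.

Lemma normalize_wave_range (e p : R) :
  - / 4 <= e <= / 16 -> 0 <= p <= 1 -> 0 <= normalize (wave e) p <= 1.
Proof.
  intros He Hp. rewrite normalize_wave.
  pose proof phi_bounds as Hphi. pose proof phi_sqr as Hsqr. simpl in Hsqr.
  set (t := Rpower phi p). set (c := cos (PI * p)).
  assert (Ht : 1 + 3 / 8 * p <= t) by (apply Rpower_phi_ge; lra).
  assert (Htle : t <= phi) by (apply Rpower_phi_le; lra).
  assert (Htphi : 3 / 8 * (1 - p) * t <= phi - t) by (apply phi_sub_Rpower_phi_ge; lra).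
  assert (Hc0 : 1 - c <= 4 * p) by (apply one_sub_cos_PI_le; lra).
  assert (Hc1 : 1 + c <= 4 * (1 - p)) by (apply one_add_cos_PI_le; lra).
  assert (Hc : -1 <= c <= 1) by apply COS_bound.
  assert (Hlow : 0 <= (t - e) * (t - 1) - e * (1 - c)).
  { clear - He Hp Ht Hc0 Hc. destruct (Rle_lt_dec e 0); nra. }
  assert (Hhigh : 0 <= t * (phi - t) - e * (t * (phi - 1) + c)).
  { assert (Hshift : t * (phi - 1) + c = (t - phi) * (phi - 1) + (1 + c)) by nra.
    rewrite Hshift. clear - He Hp Hphi Ht Htle Htphi Hc1 Hc.
    destruct (Rle_lt_dec e 0) as [Hneg | Hpos].
    - assert (0 <= (phi - t) * (t + e * (phi - 1))) by (apply Rmult_le_pos; nra).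
      assert (0 <= - e * (1 + c)) by nra.
      nra.
    - assert (1 <= t * t) by nra.
      assert (3 / 8 * (1 - p) * t * t <= t * (phi - t)) by nra.
      assert (3 / 8 * (1 - p) <= 3 / 8 * (1 - p) * t * t) by nra.
      assert (0 <= e * ((phi - t) * (phi - 1))) by (apply Rmult_le_pos; nra).
      assert (e * (1 + c) <= / 16 * (4 * (1 - p))) by nra.
      nra. }
  assert (Hden : 0 < phi - 1 - e * phi) by (clear - He Hphi; nra).
  set (N := t - 1 + e * (c / t - 1)). set (D := phi - 1 - e * phi) in *.
  assert (HN : 0 <= N).
  { apply (Rmult_le_reg_l t); [lra|].
    replace (t * N) with ((t - e) * (t - 1) - e * (1 - c)) by (unfold N; field; lra).
    lra. }
  assert (HND : N <= D).
  { cut (0 <= D - N); [lra|]. apply (Rmult_le_reg_l t); [lra|].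
    replace (t * (D - N)) with (t * (phi - t) - e * (t * (phi - 1) + c))
      by (unfold D, N; field; lra).
    lra. }
  split.
  - apply Rdiv_le_0_compat; assumption.
  - now apply (Rdiv_le_1 N D Hden).
Qed.

Definition hn_lim (p : R) : R := (Rpower phi p - 1) / (phi - 1).

Lemma normalize_wave_close (e p : R) : Rabs e <= / 4 -> 0 <= p <= 1 ->
  Rabs (normalize (wave e) p - hn_lim p) <= 12 * Rabs e.
Proof.
  intros He Hp. unfold hn_lim. rewrite normalize_wave. apply Rabs_le_between in He.
  pose proof phi_bounds as Hphi.
  set (t := Rpower phi p). set (c := cos (PI * p)).
  assert (Ht : 1 <= t) by (pose proof (Rpower_phi_ge p); unfold t; lra).
  assert (Htle : t <= phi) by (apply Rpower_phi_le; lra).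
  assert (Hc : -1 <= c <= 1) by apply COS_bound.
  assert (Hinv : 0 < / t <= 1).
  { split; [apply Rinv_0_lt_compat; lra | rewrite <- Rinv_1; apply Rinv_le_contravar; lra]. }
  set (B := c / t - 1).
  assert (HB : -2 <= B <= 0) by (unfold B, Rdiv; nra).
  set (Y := (phi - 1 - e * phi) * (phi - 1)).
  assert (HD : 0.213 <= phi - 1 - e * phi) by nra.
  assert (HY : 0.13 <= Y) by (unfold Y; nra).
  assert (E : (t - 1 + e * B) / (phi - 1 - e * phi) - (t - 1) / (phi - 1)
              = e * ((B * (phi - 1) + phi * (t - 1)) / Y)).
  { unfold Y. field. repeat split; lra. }
  rewrite E, Rabs_mult, Rmult_comm. apply Rmult_le_compat_r; [apply Rabs_pos|].
  assert (0 <= (B + 2) * (phi - 1)) by (apply Rmult_le_pos; lra).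
  assert (0 <= - B * (phi - 1)) by (apply Rmult_le_pos; lra).
  assert (0 <= phi * (t - 1)) by (apply Rmult_le_pos; lra).
  assert (0 <= phi * (phi - t)) by (apply Rmult_le_pos; lra).
  assert (Hsqr : phi * phi = phi + 1) by (rewrite <- phi_sqr; ring).
  assert (HX : Rabs (B * (phi - 1) + phi * (t - 1)) <= 1.3) by (apply Rabs_le; nra).
  rewrite Rabs_div, (Rabs_pos_eq Y) by lra.
  apply (Rle_div_l _ _ Y ltac:(lra)). lra.
Qed.

Lemma inv_phi_sqr : / phi ^ 2 = 2 - phi.
Proof. rewrite <- pow_inv, phi_inv. pose proof phi_sqr. simpl in *. lra. Qed.

Lemma wave_coef_eq (n : nat) : wave_coef n = (phi - 2) ^ n * (2 - phi).
Proof. unfold wave_coef, Rdiv. rewrite inv_phi_sqr. f_equal. f_equal. ring. Qed.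

Lemma Rabs_wave_coef_le (n : nat) : Rabs (wave_coef n) <= (2 - phi) ^ n.
Proof.
  pose proof phi_bounds.
  rewrite wave_coef_eq, Rabs_mult, <- RPow_abs, (Rabs_pos_eq (2 - phi)) by lra.
  rewrite Rabs_minus_sym, Rabs_pos_eq by lra.
  assert (0 <= (2 - phi) ^ n) by (apply pow_le; lra). nra.
Qed.

Lemma wave_coef_bounds (n : nat) : (1 <= n)%nat -> - / 4 <= wave_coef n <= / 16.
Proof.
  intros Hn. pose proof phi_bounds. rewrite wave_coef_eq.
  destruct n as [|[|m]]; [lia | simpl; nra |].
  assert (Hm : Rabs ((phi - 2) ^ m) <= 1).
  { rewrite <- RPow_abs, Rabs_minus_sym, Rabs_pos_eq by lra.
    rewrite <- (pow1 m). apply pow_incr. lra. }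
  apply Rabs_le_between in Hm.
  replace ((phi - 2) ^ S (S m) * (2 - phi)) with ((2 - phi) ^ 3 * (phi - 2) ^ m) by (simpl; ring).
  assert (0 < (2 - phi) ^ 3 <= 0.06) by (simpl; nra).
  nra.
Qed.

Lemma filterlim_within_of_ex_derive (f : R -> R) (D : R -> Prop) (x : R) :
  ex_derive f x -> filterlim f (within D (locally x)) (locally (f x)).
Proof.
  intros Hf. apply (filterlim_filter_le_1 (F := locally x)).
  - apply filter_le_within.
  - exact (ex_derive_continuous f x Hf).
Qed.

Lemma hn_lim_increasing (p q : R) : 0 <= p -> p < q -> q <= 1 -> hn_lim p < hn_lim q.
Proof.
  intros _ Hpq _. pose proof phi_bounds. unfold hn_lim.
  apply Rmult_lt_compat_r; [apply Rinv_0_lt_compat; lra|].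
  pose proof (Rpower_lt phi p q ltac:(lra) Hpq). lra.
Qed.

Lemma hn_frakF_close (n : nat) (p : R) : (1 <= n)%nat -> 0 <= p <= 1 ->
  Rabs (hn frakF n p - hn_lim p) <= 12 * (2 - phi) ^ n.
Proof.
  intros Hn Hp. rewrite hn_frakF.
  pose proof (wave_coef_bounds n Hn). pose proof (Rabs_wave_coef_le n).
  eapply Rle_trans; [apply normalize_wave_close; [apply Rabs_le; lra | exact Hp]|].
  lra.
Qed.

Theorem lemma5p2 : uniform_continuation Fib frakF.
Proof.
  pose proof phi_bounds as Hphi.
  split; [|split; [|split; [|split]]].
  - intros n Hn. destruct n as [|m]; [lia|]. apply Fib_pos_lt.
  - intros x _. apply filterlim_within_of_ex_derive.
    unfold frakF, Rpower. auto_derive. exact I.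
  - exact frakF_INR_Fib.
  - intros n p Hn Hp. rewrite hn_frakF.
    apply normalize_wave_range; [apply wave_coef_bounds, Hn | exact Hp].
  - exists hn_lim. split; [|split].
    + intros p _. apply (filterlim_within_of_ex_derive hn_lim).
      unfold hn_lim, Rpower. auto_derive. lra.
    + exact hn_lim_increasing.
    + intros eps Heps.
      destruct (pow_lt_1_zero (2 - phi) ltac:(rewrite Rabs_pos_eq; lra) (eps / 12)
                  ltac:(lra)) as [N HN].
      exists (Nat.max N 1). intros n Hn p Hp.
      pose proof (HN n ltac:(lia)) as Hsmall.
      rewrite Rabs_pos_eq in Hsmall by (apply pow_le; lra).
      pose proof (hn_frakF_close n p ltac:(lia) Hp). lra.
Qed.
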